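(* $$\pi^3=\frac{81}{4\cdot3^{5/2}}\sum_{n=0}^\infty\frac{(-1)^n}{n!}2^n\left[\gamma_n\!\left(\tfrac13\right)-\gamma_n\!\left(\tfrac23\right)\right]$$ $$=\frac{343}{32\cdot7^{5/2}}\sum_{n=0}^\infty\frac{(-1)^n}{n!}2^n\left[\gamma_n\!\left(\tfrac17\right)+\gamma_n\!\left(\tfrac27\right)-\gamma_n\!\left(\tfrac37\right)+\gamma_n\!\left(\tfrac47\right)-\gamma_n\!\left(\tfrac57\right)-\gamma_n\!\left(\tfrac67\right)\right].$$
   Context: The Stieltjes constants $\gamma_n(a)$ ($\mathrm{Re}\,a>0$) are defined by the Laurent expansion of the Hurwitz zeta function $\zeta(s,a)=\sum_{n\ge0}(n+a)^{-s}$ at $s=1$: $\zeta(s,a)=\frac{1}{s-1}+\sum_{n\ge0}\frac{(-1)^n}{n!}\gamma_n(a)(s-1)^n$. *)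

From Stdlib Require Import Reals Factorial.
From Coquelicot Require Import Coquelicot.
Open Scope R_scope.

Definition hurwitz_term (s a : R) (k : nat) : R := / Rpower (INR k + a) s.

(* The expansion is required for all real s > 1 (where the Hurwitz series
   converges); by uniqueness of power-series coefficients on an interval this
   determines g n a, i.e. g n a = gamma_n(a). *)
Definition stieltjes_laurent (g : nat -> R -> R) (a : R) : Prop :=
  forall s : R, 1 < s ->
    exists z : R,
      is_series (hurwitz_term s a) z /\
      is_series (fun n : nat => (-1) ^ n / INR (fact n) * g n a * (s - 1) ^ n)
                (z - / (s - 1)).

(* At s = 3 the Laurent expansion reads sum_n (-1)^n/n! 2^n gamma_n(a) = zeta(3,a) - 1/2, so
   both series are combinations of zeta(3,a) - zeta(3,1-a) = sum_k ((k+a)^-3 - (k+1-a)^-3),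
   which equals pi^3 h(pi a) for h y = cos y / sin^3 y = cot'' y / 2.  This classical value is
   proved elementarily: the duplication formula h(y/2) + h(y/2 + pi/2) = 8 h(y) and the
   reflection h(pi - y) = - h(y) give, for N = 2^m,
     pi^3 h(pi a) = (pi/2N)^3 sum_(k<N) (h(pi(k+a)/2N) - h(pi(k+1-a)/2N)),
   and since h(y) - y^-3 is bounded on (0, pi/2) this differs from the N-th partial sum by
   O(1/N^2).  Convergence of the series is part of the hypothesis, so identifying the limit
   along N = 2^m suffices.  Finally h(pi/3) = 4/(3 sqrt 3) and
     h(pi/7) + h(2pi/7) + h(4pi/7) = 4 / (sin(pi/7) sin(2pi/7) sin(4pi/7)) = 32 / sqrt 7,
   where the last two equalities are polynomial identities in c = cos(pi/7) modulo its
   minimal polynomial 8c^3 - 4c^2 - 4c + 1. *)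

From Stdlib Require Import Reals Factorial Lra Lia Nsatz.
From Coquelicot Require Import Coquelicot.
Open Scope R_scope.

Lemma sum_f_R0_halves (f : nat -> R) (n : nat) :
  sum_f_R0 f (2 * n + 1) = sum_f_R0 f n + sum_f_R0 (fun i => f (S n + i)%nat) n.
Proof.
  rewrite (tech2 f n (2 * n + 1)) by lia.
  now replace (2 * n + 1 - S n)%nat with n by lia.
Qed.

Lemma sum_f_R0_rev (f : nat -> R) (n : nat) :
  sum_f_R0 f n = sum_f_R0 (fun i => f (n - i)%nat) n.
Proof.
  induction n as [|n IH]; [reflexivity|].
  rewrite (decomp_sum (fun i => f (S n - i)%nat)) by lia.
  change (sum_f_R0 f (S n)) with (sum_f_R0 f n + f (S n)).
  rewrite IH, Rplus_comm. reflexivity.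
Qed.

Lemma sum_f_R0_opp (f : nat -> R) (n : nat) :
  sum_f_R0 (fun i => - f i) n = - sum_f_R0 f n.
Proof. induction n as [|n IH]; simpl; [|rewrite IH]; ring. Qed.

Lemma INR_pow2 (m : nat) : INR (2 ^ m) = 2 ^ m.
Proof. rewrite pow_INR. reflexivity. Qed.

Lemma INR_pow2_pred (m : nat) : INR (2 ^ m - 1) = 2 ^ m - 1.
Proof.
  pose proof (Nat.pow_gt_lin_r 2 m).
  rewrite minus_INR, INR_pow2 by lia. reflexivity.
Qed.

Lemma pow2_pred_double (m : nat) : (2 ^ S m - 1 = 2 * (2 ^ m - 1) + 1)%nat.
Proof. pose proof (Nat.pow_gt_lin_r 2 m). simpl. lia. Qed.

Definition cot_csc2 (y : R) : R := cos y / sin y ^ 3.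

Lemma cot_csc2_PI_minus (y : R) : cot_csc2 (PI - y) = - cot_csc2 y.
Proof.
  unfold cot_csc2. rewrite sin_PI_x, Rtrigo_facts.cos_pi_minus.
  unfold Rdiv. ring.
Qed.

Lemma cot_csc2_duplication (y : R) :
  sin y <> 0 -> cot_csc2 (y / 2) + cot_csc2 (y / 2 + PI / 2) = 8 * cot_csc2 y.
Proof.
  set (z := y / 2). replace y with (2 * z) by (unfold z; field).
  rewrite sin_2a. intros Hsc.
  assert (Hs : sin z <> 0) by (intros E; apply Hsc; rewrite E; ring).
  assert (Hc : cos z <> 0) by (intros E; apply Hsc; rewrite E; ring).
  assert (Hpyth : sin z ^ 2 + cos z ^ 2 = 1)
    by (rewrite <- (sin2_cos2 z); unfold Rsqr; ring).
  unfold cot_csc2.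
  rewrite sin_plus, cos_plus, sin_PI2, cos_PI2, sin_2a, cos_2a.
  (* the left side has numerator [cos^4 - sin^4 = cos^2 - sin^2] *)
  replace (cos z * cos z - sin z * sin z)
    with ((cos z * cos z - sin z * sin z) * (sin z ^ 2 + cos z ^ 2))
    by (rewrite Hpyth; ring).
  field. auto.
Qed.

Lemma IZR_not_in_open_unit (a : R) (k : Z) : 0 < a < 1 -> a <> IZR k.
Proof.
  intros [H0 H1] ->. apply lt_0_IZR in H0. apply lt_IZR in H1. lia.
Qed.

Lemma sin_dyadic_neq0 (a : R) (m j : nat) :
  0 < a < 1 -> sin (PI * (INR j + a) / 2 ^ m) <> 0.
Proof.
  intros Ha E. apply sin_eq_0_0 in E as [k Hk].
  pose proof PI_RGT_0.
  assert (H2 : 0 < 2 ^ m) by (apply pow_lt; lra).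
  assert (E : a = IZR k * 2 ^ m - INR j).
  { apply Rmult_eq_reg_l with (PI / 2 ^ m); [|apply Rgt_not_eq, Rdiv_lt_0_compat; lra].
    replace (PI / 2 ^ m * (IZR k * 2 ^ m - INR j)) with (IZR k * PI - PI * INR j / 2 ^ m)
      by (field; lra).
    rewrite <- Hk. field. lra. }
  apply (IZR_not_in_open_unit a (k * Z.of_nat (2 ^ m) - Z.of_nat j) Ha).
  rewrite minus_IZR, mult_IZR, <- !INR_IZR_INZ, INR_pow2. exact E.
Qed.

Lemma cot_csc2_dyadic_sum (a : R) (m : nat) : 0 < a < 1 ->
  sum_f_R0 (fun j => cot_csc2 (PI * (INR j + a) / 2 ^ m)) (2 ^ m - 1)
  = 8 ^ m * cot_csc2 (PI * a).
Proof.
  intros Ha. induction m as [|m IH].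
  - cbn. replace (PI * (0 + a) / 1) with (PI * a) by field. ring.
  - assert (H2m : 2 ^ m <> 0) by (apply pow_nonzero; lra).
    rewrite pow2_pred_double, sum_f_R0_halves, <- plus_sum, <- (tech_pow_Rmult 8 m),
      Rmult_assoc, <- IH, scal_sum.
    apply sum_eq. intros j _.
    set (y := PI * (INR j + a) / 2 ^ m).
    replace (PI * (INR j + a) / 2 ^ S m) with (y / 2) by (unfold y; simpl; field; exact H2m).
    replace (PI * (INR (S (2 ^ m - 1) + j) + a) / 2 ^ S m) with (y / 2 + PI / 2)
      by (unfold y; rewrite plus_INR, S_INR, INR_pow2_pred; simpl; field; exact H2m).
    rewrite cot_csc2_duplication by (apply sin_dyadic_neq0, Ha). ring.
Qed.

Lemma cot_csc2_folded_sum (a : R) (m : nat) : 0 < a < 1 ->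
  sum_f_R0 (fun k => cot_csc2 (PI * (INR k + a) / 2 ^ S m)
                     - cot_csc2 (PI * (INR k + 1 - a) / 2 ^ S m)) (2 ^ m - 1)
  = 8 ^ S m * cot_csc2 (PI * a).
Proof.
  intros Ha. pose proof (INR_pow2_pred m) as HN.
  rewrite <- (cot_csc2_dyadic_sum a (S m) Ha), pow2_pred_double, sum_f_R0_halves, minus_sum.
  set (n := (2 ^ m - 1)%nat) in *.
  (* the upper half of the dyadic points is the lower half reflected through [PI / 2] *)
  enough (Hupper : sum_f_R0 (fun i => cot_csc2 (PI * (INR (S n + i) + a) / 2 ^ S m)) n
                   = - sum_f_R0 (fun k => cot_csc2 (PI * (INR k + 1 - a) / 2 ^ S m)) n)
    by (rewrite Hupper; ring).
  rewrite sum_f_R0_rev, <- sum_f_R0_opp. apply sum_eq. intros k Hk.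
  rewrite <- cot_csc2_PI_minus. f_equal.
  rewrite plus_INR, S_INR, minus_INR, HN by exact Hk. simpl. field.
  apply pow_nonzero. lra.
Qed.

Lemma sin_taylor_bounds (y : R) : 0 <= y <= PI ->
  y - y^3/6 + y^5/120 - y^7/5040 <= sin y
  <= y - y^3/6 + y^5/120 - y^7/5040 + y^9/362880.
Proof.
  intros Hy. destruct (SIN y) as [Hl Hu]; try lra.
  split; [refine (Rle_trans _ _ _ _ Hl) | refine (Rle_trans _ _ _ Hu _)]; right;
    unfold sin_lb, sin_ub, sin_approx, sin_term; cbn [sum_f_R0 Nat.mul Nat.add];
    rewrite !fact_simpl, !mult_INR; simpl INR; field.
Qed.

Lemma cos_taylor_bounds (y : R) : - PI / 2 <= y <= PI / 2 ->
  1 - y^2/2 + y^4/24 - y^6/720 <= cos y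
  <= 1 - y^2/2 + y^4/24 - y^6/720 + y^8/40320.
Proof.
  intros Hy. destruct (COS y) as [Hl Hu]; try lra.
  split; [refine (Rle_trans _ _ _ _ Hl) | refine (Rle_trans _ _ _ Hu _)]; right;
    unfold cos_lb, cos_ub, cos_approx, cos_term; cbn [sum_f_R0 Nat.mul Nat.add];
    rewrite !fact_simpl, !mult_INR; simpl INR; field.
Qed.

Lemma pow_6_add_le (y : R) (k : nat) : 0 <= y <= 2 -> 0 <= y ^ (6 + k) <= 2 ^ k * y ^ 6.
Proof.
  intros Hy. rewrite pow_add. split.
  - apply Rmult_le_pos; apply pow_le; lra.
  - rewrite Rmult_comm. apply Rmult_le_compat_r; [apply pow_le | apply pow_incr]; lra.
Qed.

(* The two sides agree up to order [y^5], and on [0, 2] every higher monomial is a bounded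
   multiple of [y^6]. *)
Lemma taylor_cube_upper (y : R) : 0 <= y <= 2 ->
  (1 - y^2/2 + y^4/24 - y^6/720 + y^8/40320) * y^3
  - (y - y^3/6 + y^5/120 - y^7/5040)^3 <= y^6.
Proof.
  intros Hy.
  pose proof (pow_6_add_le y 1 Hy). pose proof (pow_6_add_le y 3 Hy).
  pose proof (pow_6_add_le y 5 Hy). pose proof (pow_6_add_le y 7 Hy).
  pose proof (pow_6_add_le y 9 Hy). pose proof (pow_6_add_le y 11 Hy).
  pose proof (pow_6_add_le y 13 Hy). pose proof (pow_6_add_le y 15 Hy).
  simpl in *. lra.
Qed.

Lemma taylor_cube_lower (y : R) : 0 <= y <= 2 ->
  - y^6 <= (1 - y^2/2 + y^4/24 - y^6/720) * y^3 - (y - y^3/6 + y^5/120)^3.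
Proof.
  intros Hy.
  pose proof (pow_6_add_le y 1 Hy). pose proof (pow_6_add_le y 3 Hy).
  pose proof (pow_6_add_le y 5 Hy). pose proof (pow_6_add_le y 7 Hy).
  pose proof (pow_6_add_le y 9 Hy).
  simpl in *. lra.
Qed.

Lemma sin_taylor_lower_ge_third (y : R) : 0 <= y <= 2 ->
  y / 3 <= y - y^3/6 + y^5/120 - y^7/5040.
Proof.
  intros Hy.
  assert (y ^ 2 <= 4) by nra.
  assert (0 <= y ^ 5) by (apply pow_le; lra).
  assert (y ^ 3 <= 4 * y) by (replace (y ^ 3) with (y * y ^ 2) by ring; nra).
  assert (y ^ 7 <= 4 * y ^ 5) by (replace (y ^ 7) with (y ^ 5 * y ^ 2) by ring; nra).
  lra.
Qed.

Lemma sin_ge_third (y : R) : 0 <= y <= PI / 2 -> y / 3 <= sin y.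
Proof.
  intros Hy. pose proof PI_4.
  destruct (sin_taylor_bounds y) as [Hl _]; [lra|].
  pose proof (sin_taylor_lower_ge_third y ltac:(lra)). lra.
Qed.

Lemma cos_mul_cube_sub_sin_cube_bound (y : R) : 0 <= y <= PI / 2 ->
  Rabs (cos y * y ^ 3 - sin y ^ 3) <= y ^ 6.
Proof.
  intros Hy. pose proof PI_4.
  assert (Hy2 : 0 <= y <= 2) by lra.
  destruct (sin_taylor_bounds y) as [Hsl Hsu]; [lra|].
  destruct (cos_taylor_bounds y) as [Hcl Hcu]; [lra|].
  pose proof (sin_taylor_lower_ge_third y Hy2).
  assert (0 <= y ^ 3) by (apply pow_le; lra).
  assert (y ^ 9 <= 4 * y ^ 7).
  { replace (y ^ 9) with (y ^ 7 * y ^ 2) by ring.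
    replace (4 * y ^ 7) with (y ^ 7 * 4) by ring.
    apply Rmult_le_compat_l; [apply pow_le|]; nra. }
  apply Rabs_le. split.
  - assert (sin y ^ 3 <= (y - y^3/6 + y^5/120) ^ 3) by (apply pow_incr; lra).
    assert ((1 - y^2/2 + y^4/24 - y^6/720) * y ^ 3 <= cos y * y ^ 3)
      by (apply Rmult_le_compat_r; lra).
    pose proof (taylor_cube_lower y Hy2). lra.
  - assert ((y - y^3/6 + y^5/120 - y^7/5040) ^ 3 <= sin y ^ 3) by (apply pow_incr; lra).
    assert (cos y * y ^ 3 <= (1 - y^2/2 + y^4/24 - y^6/720 + y^8/40320) * y ^ 3)
      by (apply Rmult_le_compat_r; lra).
    pose proof (taylor_cube_upper y Hy2). lra.
Qed.

Lemma cot_csc2_sub_inv_cube_bound (y : R) : 0 < y < PI / 2 ->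
  Rabs (cot_csc2 y - / y ^ 3) <= 27.
Proof.
  intros Hy.
  pose proof (sin_ge_third y ltac:(lra)) as Hthird.
  pose proof (cos_mul_cube_sub_sin_cube_bound y ltac:(lra)) as Hnum.
  assert (Hy3 : 0 < y ^ 3) by (apply pow_lt; lra).
  assert (Hs3 : y ^ 3 <= 27 * sin y ^ 3).
  { replace (y ^ 3) with (27 * (y / 3) ^ 3) by field.
    apply Rmult_le_compat_l; [lra|]. apply pow_incr. lra. }
  assert (Hs3pos : 0 < sin y ^ 3) by lra.
  replace (cot_csc2 y - / y ^ 3) with ((cos y * y ^ 3 - sin y ^ 3) / (sin y ^ 3 * y ^ 3))
    by (unfold cot_csc2; field; lra).
  unfold Rdiv. rewrite Rabs_mult, Rabs_inv, (Rabs_pos_eq (sin y ^ 3 * y ^ 3)) by nra.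
  apply Rle_trans with (y ^ 6 * / (sin y ^ 3 * y ^ 3)).
  - apply Rmult_le_compat_r; [left; apply Rinv_0_lt_compat; nra | exact Hnum].
  - replace (y ^ 6 * / (sin y ^ 3 * y ^ 3)) with (y ^ 3 / sin y ^ 3) by (field; lra).
    apply Rle_div_l; lra.
Qed.

Definition cube_diff (a : R) (k : nat) : R := / (INR k + a) ^ 3 - / (INR k + 1 - a) ^ 3.

Lemma pow_pow_comm (x : R) (k m : nat) : (x ^ k) ^ m = (x ^ m) ^ k.
Proof. rewrite <- !pow_mult, Nat.mul_comm. reflexivity. Qed.

Lemma dyadic_angle_bounds (x : R) (m : nat) :
  0 < x < 2 ^ m -> 0 < PI * x / 2 ^ S m < PI / 2.
Proof.
  intros Hx. pose proof PI_RGT_0. pose proof (pow_lt 2 m ltac:(lra)).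
  simpl. split.
  - apply Rdiv_lt_0_compat; nra.
  - replace (PI / 2) with (PI * 2 ^ m / (2 * 2 ^ m)) by (field; lra).
    apply Rmult_lt_compat_r; [apply Rinv_0_lt_compat; lra | nra].
Qed.

Lemma cube_diff_partial_sum_defect (a : R) (m : nat) : 0 < a < 1 ->
  PI ^ 3 * cot_csc2 (PI * a) - sum_f_R0 (cube_diff a) (2 ^ m - 1)
  = (PI / 2 ^ S m) ^ 3 * sum_f_R0 (fun k =>
      (cot_csc2 (PI * (INR k + a) / 2 ^ S m) - / (PI * (INR k + a) / 2 ^ S m) ^ 3)
      - (cot_csc2 (PI * (INR k + 1 - a) / 2 ^ S m) - / (PI * (INR k + 1 - a) / 2 ^ S m) ^ 3))
      (2 ^ m - 1).
Proof.
  intros Ha. pose proof PI_RGT_0.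
  assert (H2Sm : 2 ^ S m <> 0) by (apply pow_nonzero; lra).
  replace (PI ^ 3 * cot_csc2 (PI * a))
    with ((PI / 2 ^ S m) ^ 3 * (8 ^ S m * cot_csc2 (PI * a))).
  2: { replace (8 ^ S m) with ((2 ^ S m) ^ 3) by (rewrite pow_pow_comm; f_equal; ring).
       field. exact H2Sm. }
  rewrite <- (cot_csc2_folded_sum a m Ha), !scal_sum, <- minus_sum.
  apply sum_eq. intros k _. pose proof (pos_INR k).
  unfold cube_diff. field. repeat split; lra.
Qed.

Lemma cube_diff_partial_sum_approx (a : R) (m : nat) : 0 < a < 1 ->
  Rabs (PI ^ 3 * cot_csc2 (PI * a) - sum_f_R0 (cube_diff a) (2 ^ m - 1)) <= 432 / 4 ^ m.
Proof.
  intros Ha. pose proof PI_RGT_0. pose proof PI_4.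
  assert (H2m : 0 < 2 ^ m) by (apply pow_lt; lra).
  assert (Hstep : 0 <= (PI / 2 ^ S m) ^ 3)
    by (apply pow_le, Rlt_le, Rdiv_lt_0_compat; [lra | apply pow_lt; lra]).
  rewrite (cube_diff_partial_sum_defect a m Ha), Rabs_mult, (Rabs_pos_eq _ Hstep).
  apply Rle_trans with ((PI / 2 ^ S m) ^ 3 * (54 * 2 ^ m)).
  - apply Rmult_le_compat_l; [exact Hstep|].
    replace (54 * 2 ^ m) with (sum_f_R0 (fun _ => 27 + 27) (2 ^ m - 1))
      by (rewrite sum_cte, S_INR, INR_pow2_pred; ring).
    apply Rle_trans with (1 := sum_f_R0_triangle _ _). apply sum_Rle. intros k Hk.
    apply le_INR in Hk. rewrite INR_pow2_pred in Hk. pose proof (pos_INR k).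
    pose proof (cot_csc2_sub_inv_cube_bound _ (dyadic_angle_bounds (INR k + a) m ltac:(lra))).
    pose proof (cot_csc2_sub_inv_cube_bound _ (dyadic_angle_bounds (INR k + 1 - a) m ltac:(lra))).
    eapply Rle_trans; [apply Rabs_triang|]. rewrite Rabs_Ropp. lra.
  - replace (4 ^ m) with ((2 ^ m) ^ 2) by (rewrite pow_pow_comm; f_equal; ring).
    replace ((PI / 2 ^ S m) ^ 3 * (54 * 2 ^ m)) with (54 * PI ^ 3 / 8 / (2 ^ m) ^ 2)
      by (simpl; field; lra).
    apply Rmult_le_compat_r; [left; apply Rinv_0_lt_compat, pow_lt; lra|].
    assert (PI ^ 3 <= 4 ^ 3) by (apply pow_incr; lra). lra.
Qed.

Lemma is_series_ext_R (a b : nat -> R) (l : R) :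
  (forall n, a n = b n) -> is_series a l -> is_series b l.
Proof. exact (is_series_ext a b l). Qed.

Lemma cube_diff_series_sum (a L : R) : 0 < a < 1 ->
  is_series (cube_diff a) L -> L = PI ^ 3 * cot_csc2 (PI * a).
Proof.
  intros Ha HL.
  set (X := PI ^ 3 * cot_csc2 (PI * a)).
  set (dyadic := fun m => sum_n (cube_diff a) (2 ^ m - 1)).
  assert (HdL : is_lim_seq dyadic L).
  { apply (is_lim_seq_subseq (sum_n (cube_diff a)) L (fun m => (2 ^ m - 1)%nat)); [|exact HL].
    intros P [N HN]. exists (S N). intros m Hm. apply HN.
    pose proof (Nat.pow_gt_lin_r 2 m). lia. }
  assert (Hgeom : is_lim_seq (fun m => 432 / 4 ^ m) 0).
  { apply (is_lim_seq_ext (fun m => 432 * (/ 4) ^ m)).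
    { intros m. rewrite pow_inv. reflexivity. }
    replace (Finite 0) with (Rbar_mult 432 0) by (simpl; f_equal; ring).
    apply is_lim_seq_scal_l, is_lim_seq_geom. rewrite Rabs_pos_eq; lra. }
  assert (HeL : is_lim_seq (fun m => dyadic m - X) (L - X))
    by (apply is_lim_seq_minus'; [exact HdL | apply is_lim_seq_const]).
  assert (He0 : is_lim_seq (fun m => dyadic m - X) 0).
  { apply is_lim_seq_abs_0, (is_lim_seq_le_le (fun _ => 0) _ (fun m => 432 / 4 ^ m)).
    - intros m. split; [apply Rabs_pos|].
      unfold dyadic. rewrite sum_n_Reals, Rabs_minus_sym.
      exact (cube_diff_partial_sum_approx a m Ha).
    - apply is_lim_seq_const.
    - exact Hgeom. }
  apply is_lim_seq_unique in HeL, He0. rewrite HeL in He0.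
  injection He0. lra.
Qed.

Lemma hurwitz_term_3 (a : R) (k : nat) : 0 < a -> hurwitz_term 3 a k = / (INR k + a) ^ 3.
Proof.
  intros Ha. unfold hurwitz_term.
  replace 3 with (INR 3) at 1 by (simpl; ring).
  rewrite Rpower_pow; [reflexivity|]. pose proof (pos_INR k). lra.
Qed.

Lemma stieltjes_difference_series (g : nat -> R -> R)
  (hg : forall a : R, 0 < a -> stieltjes_laurent g a) (a b : R) : 0 < a < 1 -> a + b = 1 ->
  is_series (fun n => (-1) ^ n / INR (fact n) * 2 ^ n * (g n a - g n b))
            (PI ^ 3 * cot_csc2 (PI * a)).
Proof.
  intros Ha Hab.
  destruct (hg a ltac:(lra) 3 ltac:(lra)) as [za [Hza Hlaura]].
  destruct (hg b ltac:(lra) 3 ltac:(lra)) as [zb [Hzb Hlaurb]].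
  replace (3 - 1) with 2 in Hlaura, Hlaurb by ring.
  assert (Hdiff : za - zb = PI ^ 3 * cot_csc2 (PI * a)).
  { apply cube_diff_series_sum; [exact Ha|].
    refine (is_series_ext_R _ _ _ _ (is_series_minus _ _ _ _ Hza Hzb)).
    intros k. unfold cube_diff. rewrite !hurwitz_term_3 by lra.
    replace (INR k + 1 - a) with (INR k + b) by lra. reflexivity. }
  rewrite <- Hdiff.
  replace (za - zb) with ((za - / 2) - (zb - / 2)) by ring.
  refine (is_series_ext_R _ _ _ _ (is_series_minus _ _ _ _ Hlaura Hlaurb)).
  intros n. unfold minus, plus, opp. simpl. ring.
Qed.

Lemma cot_csc2_PI3 : cot_csc2 (PI / 3) = 4 / (3 * sqrt 3).
Proof.
  unfold cot_csc2. rewrite sin_PI3, cos_PI3.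
  assert (H3 : 0 < sqrt 3) by (apply sqrt_lt_R0; lra).
  replace ((sqrt 3 / 2) ^ 3) with (sqrt 3 * sqrt 3 * sqrt 3 / 8) by field.
  rewrite sqrt_sqrt by lra. field. lra.
Qed.

Lemma cos_PI7_minimal_polynomial :
  8 * cos (PI / 7) ^ 3 - 4 * cos (PI / 7) ^ 2 - 4 * cos (PI / 7) + 1 = 0.
Proof.
  set (x := PI / 7). pose proof PI_RGT_0.
  assert (Hc : 0 < cos x) by (apply cos_gt_0; unfold x; lra).
  assert (Hpyth : sin x ^ 2 = 1 - cos x ^ 2)
    by (rewrite <- (sin2_cos2 x); unfold Rsqr; ring).
  assert (Hcos3 : cos (3 * x) = 4 * cos x ^ 3 - 3 * cos x).
  { replace (3 * x) with (2 * x + x) by ring.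
    rewrite cos_plus, sin_2a, cos_2a_cos.
    replace (2 * sin x * cos x * sin x) with (2 * cos x * sin x ^ 2) by ring.
    rewrite Hpyth. ring. }
  assert (H43 : cos (2 * (2 * x)) = - cos (3 * x)).
  { replace (2 * (2 * x)) with (PI - 3 * x) by (unfold x; field).
    apply Rtrigo_facts.cos_pi_minus. }
  rewrite cos_2a_cos, cos_2a_cos, Hcos3 in H43.
  assert (Hprod : (cos x + 1) * (8 * cos x ^ 3 - 4 * cos x ^ 2 - 4 * cos x + 1) = 0) by lra.
  apply Rmult_integral in Hprod as [Hneg | Hcubic]; [lra | exact Hcubic].
Qed.

Lemma sin_PI7_product :
  sin (PI / 7) * sin (2 * (PI / 7)) * sin (4 * (PI / 7)) = sqrt 7 / 8.
Proof.
  pose proof cos_PI7_minimal_polynomial as Hcubic.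
  set (x := PI / 7) in *. pose proof PI_RGT_0.
  assert (Hpos : 0 < sin x * sin (2 * x) * sin (4 * x)).
  { repeat apply Rmult_lt_0_compat; apply sin_gt_0; unfold x; lra. }
  assert (Hpyth : sin x ^ 2 + cos x ^ 2 = 1)
    by (rewrite <- (sin2_cos2 x); unfold Rsqr; ring).
  assert (Hsq : 64 * (sin x * sin (2 * x) * sin (4 * x)) ^ 2 = 7).
  { replace (4 * x) with (2 * (2 * x)) by ring.
    rewrite !sin_2a, cos_2a_cos.
    (* [nsatz] needs the trigonometric atoms as plain variables and [pow] unfolded *)
    set (c := cos x) in *. set (s := sin x) in *. clearbody c s. clear - Hcubic Hpyth.
    cbn [pow] in *. nsatz. }
  pose proof (sqrt_lt_R0 7 ltac:(lra)).
  pose proof (sqrt_sqrt 7 ltac:(lra)).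
  nra.
Qed.

Lemma cot_csc2_PI7_sum :
  cot_csc2 (PI / 7) + cot_csc2 (2 * (PI / 7)) + cot_csc2 (4 * (PI / 7))
  = 4 / (sin (PI / 7) * sin (2 * (PI / 7)) * sin (4 * (PI / 7))).
Proof.
  pose proof cos_PI7_minimal_polynomial as Hcubic.
  set (x := PI / 7) in *. pose proof PI_RGT_0.
  assert (Hs : 0 < sin x) by (apply sin_gt_0; unfold x; lra).
  assert (Hc : 0 < cos x) by (apply cos_gt_0; unfold x; lra).
  assert (Hc2 : 0 < cos (2 * x)) by (apply cos_gt_0; unfold x; lra).
  rewrite cos_2a_cos in Hc2.
  replace (4 * x) with (2 * (2 * x)) by ring.
  unfold cot_csc2. rewrite !sin_2a, !cos_2a_cos.
  set (c := cos x) in *. set (s := sin x) in *. clearbody c s.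
  field_simplify_eq; [clear - Hcubic; cbn [pow] in *; nsatz | repeat split; lra].
Qed.

Lemma Rpower_five_halves (x : R) : 0 < x -> Rpower x (5 / 2) = x ^ 2 * sqrt x.
Proof.
  intros Hx. replace (5 / 2) with (INR 2 + / 2) by (simpl; field).
  rewrite Rpower_plus, Rpower_pow, Rpower_sqrt by exact Hx. reflexivity.
Qed.

Lemma series_value_thirds :
  81 / (4 * Rpower 3 (5 / 2)) * (PI ^ 3 * cot_csc2 (PI * (1 / 3))) = PI ^ 3.
Proof.
  replace (PI * (1 / 3)) with (PI / 3) by field.
  rewrite cot_csc2_PI3, Rpower_five_halves by lra.
  pose proof (sqrt_lt_R0 3 ltac:(lra)).
  replace (81 / (4 * (3 ^ 2 * sqrt 3)) * (PI ^ 3 * (4 / (3 * sqrt 3))))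
    with (PI ^ 3 * 3 / (sqrt 3 * sqrt 3)) by (field; lra).
  rewrite sqrt_sqrt by lra. field.
Qed.

Lemma series_value_sevenths :
  343 / (32 * Rpower 7 (5 / 2))
  * (PI ^ 3 * (cot_csc2 (PI * (1 / 7)) + cot_csc2 (PI * (2 / 7)) + cot_csc2 (PI * (4 / 7))))
  = PI ^ 3.
Proof.
  replace (PI * (1 / 7)) with (PI / 7) by field.
  replace (PI * (2 / 7)) with (2 * (PI / 7)) by field.
  replace (PI * (4 / 7)) with (4 * (PI / 7)) by field.
  rewrite cot_csc2_PI7_sum, sin_PI7_product, Rpower_five_halves by lra.
  pose proof (sqrt_lt_R0 7 ltac:(lra)).
  replace (343 / (32 * (7 ^ 2 * sqrt 7)) * (PI ^ 3 * (4 / (sqrt 7 / 8))))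
    with (PI ^ 3 * 7 / (sqrt 7 * sqrt 7)) by (field; lra).
  rewrite sqrt_sqrt by lra. field.
Qed.

Theorem corollary1 (g : nat -> R -> R)
  (hg : forall a : R, 0 < a -> stieltjes_laurent g a) :
  let u3 := fun n : nat =>
    (-1) ^ n / INR (fact n) * 2 ^ n * (g n (1/3) - g n (2/3)) in
  let u7 := fun n : nat =>
    (-1) ^ n / INR (fact n) * 2 ^ n *
    (g n (1/7) + g n (2/7) - g n (3/7) + g n (4/7) - g n (5/7) - g n (6/7)) in
  ex_series u3 /\ ex_series u7 /\
  PI ^ 3 = 81 / (4 * Rpower 3 (5/2)) * Series u3 /\
  PI ^ 3 = 343 / (32 * Rpower 7 (5/2)) * Series u7.
Proof.
  intros u3 u7.
  assert (S3 : is_series u3 (PI ^ 3 * cot_csc2 (PI * (1 / 3))))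
    by (apply (stieltjes_difference_series g hg); lra).
  assert (S7 : is_series u7 (PI ^ 3 * cot_csc2 (PI * (1 / 7)) + PI ^ 3 * cot_csc2 (PI * (2 / 7))
                             + PI ^ 3 * cot_csc2 (PI * (4 / 7)))).
  { refine (is_series_ext_R _ _ _ _ (is_series_plus _ _ _ _ (is_series_plus _ _ _ _
      (stieltjes_difference_series g hg (1 / 7) (6 / 7) _ _)
      (stieltjes_difference_series g hg (2 / 7) (5 / 7) _ _))
      (stieltjes_difference_series g hg (4 / 7) (3 / 7) _ _))); try lra.
    intros n. unfold u7, plus. simpl. ring. }
  split; [eexists; exact S3|]. split; [eexists; exact S7|].
  rewrite (is_series_unique _ _ S3), (is_series_unique _ _ S7), <- !Rmult_plus_distr_l.
  split; symmetry; [apply series_value_thirds | apply series_value_sevenths].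
Qed.
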